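(* Let $(G,k)$ be an instance and $V_{\mathrm{ld}}$ the set of large-dense vertices. Suppose that no vertex $v\in V_{\mathrm{ld}}$ admits a collection of $k+1$ vertex sets, each contained in $V_{\mathrm{ld}}$ and inducing $P_3$, such that any two of them intersect exactly in $\{v\}$. If there is a collection $\mathcal{P}$ of more than $k^2$ vertex sets, each contained in $V_{\mathrm{ld}}$ and inducing $P_3$, such that any two members of $\mathcal{P}$ share at most one vertex, then $(G,k)$ is a no-instance.
   Context: Graphs are undirected, without self-loops, possibly with multi-edges. $N(v)$ is the set of vertices adjacent to $v$; $\rho(v)$ is the number of unordered pairs $\{u_1,u_2\}\subseteq N(v)$ joined by at least one edge. A vertex $v$ is large-dense if $|N(v)|>7k$ and $\rho(v)> |N(v)|(|N(v)|-1)/4$. A set of three distinct vertices $\{v_1,v_2,v_3\}$ induces $P_3$ if $v_1v_2$ and $v_2v_3$ are edges (possibly multi-edges) and $v_1v_3$ is not an edge. A vertex set induces a clique if between any two distinct vertices there is exactly one edge, and a tree if it is connected and acyclic (two parallel edges form a cycle). A feasible solution is $X\subseteq V$, $|X|\le k$, with every component of $G-X$ a clique or a tree; $(G,k)$ is a yes-instance if one exists. *)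

(* A multigraph on a finite vertex type T is given by an
   edge-multiplicity function m : T -> T -> nat (m u v = number of edges
   between u and v); it is assumed symmetric and loopless in the theorem. *)
From mathcomp Require Import all_boot.
Set Implicit Arguments. Unset Strict Implicit. Unset Printing Implicit Defensive.

Section Multigraph.
Variable T : finType.
Variable m : T -> T -> nat.

Definition adj : rel T := fun u v => 0 < m u v.

Definition nbhd (v : T) : {set T} := [set u | adj v u].

Definition rho (v : T) : nat :=
  #|[set S : {set T} | (S \subset nbhd v) &&
     [exists u1, exists u2, [&& u1 != u2, S == [set u1; u2] & adj u1 u2]]]|.

Definition large_dense (k : nat) (v : T) : bool :=
  (7 * k < #|nbhd v|) && (#|nbhd v| * (#|nbhd v| - 1) < 4 * rho v).

Definition V_ld (k : nat) : {set T} := [set v | large_dense k v].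

Definition induces_P3 (S : {set T}) : Prop :=
  exists v1 v2 v3 : T, [/\ v1 != v2, v2 != v3, v1 != v3,
    S = [set v1; v2; v3] & [/\ adj v1 v2, adj v2 v3 & ~~ adj v1 v3]].

Definition adj_in (C : {set T}) : rel T :=
  fun x y => [&& adj x y, x \in C & y \in C].

Definition connected_in (C : {set T}) : Prop :=
  forall x y, x \in C -> y \in C -> connect (adj_in C) x y.

Definition component_of_minus (X C : {set T}) : Prop :=
  [/\ C != set0, [disjoint C & X], connected_in C &
      forall x y, x \in C -> y \notin X -> adj x y -> y \in C].

Definition induces_clique (C : {set T}) : Prop :=
  forall u v, u \in C -> v \in C -> u != v -> m u v = 1.

(* acyclic: no two parallel edges (a 2-cycle) and no cycle on >= 3
   distinct vertices *)
Definition acyclic_in (C : {set T}) : Prop :=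
  (forall u v, u \in C -> v \in C -> m u v <= 1) /\
  ~ (exists s : seq T,
       [/\ uniq s, 3 <= size s, {subset s <= C} & cycle adj s]).

Definition induces_tree (C : {set T}) : Prop :=
  connected_in C /\ acyclic_in C.

Definition feasible (k : nat) (X : {set T}) : Prop :=
  #|X| <= k /\
  forall C, component_of_minus X C -> induces_clique C \/ induces_tree C.

Definition yes_instance (k : nat) : Prop := exists X, feasible k X.

End Multigraph.

(** If [X] is a solution, every [P_3] inside [V_ld] must meet [X]: otherwise its
    vertices lie in one component of [G - X], which cannot be a clique (the
    [P_3] has a non-edge) and cannot be a tree either, because in a tree
    component every edge inside [N(v)] has an endpoint in [X], so
    [rho(v) <= |X| |N(v)| <= k |N(v)|], which contradicts large-density of [v].
    As [|X| <= k] and there are more than [k^2] such [P_3]'s, some [x] in [X]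
    lies in [k + 1] of them; since they pairwise share at most one vertex,
    they pairwise meet exactly in [{x}], which is a forbidden flower. *)

From mathcomp Require Import all_boot.
From mathcomp Require Import zify.
Set Implicit Arguments. Unset Strict Implicit. Unset Printing Implicit Defensive.

Section Counting.
Variables (I T : finType).

Lemma leq_card_bigcup (A : {set I}) (F : I -> {set T}) :
  #|\bigcup_(i in A) F i| <= \sum_(i in A) #|F i|.
Proof.
elim/big_rec2: _ => [|i n U _ IH]; first by rewrite cards0.
by rewrite (leq_trans (leq_card_setU _ _).1) ?leq_add2l.
Qed.

Lemma leq_card_sub_bigcup (A : {set I}) (F : I -> {set T}) (B : {set T}) c :
  B \subset \bigcup_(i in A) F i -> (forall i, i \in A -> #|F i| <= c) ->
  #|B| <= #|A| * c.
Proof.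
move=> sBF leFc; rewrite (leq_trans (subset_leq_card sBF)) //.
rewrite (leq_trans (leq_card_bigcup _ _)) // -sum_nat_const.
exact: leq_sum.
Qed.

End Counting.

Lemma hitting_set_pigeonhole (T : finType) (X : {set T}) (Pc : {set {set T}}) k :
  (forall P, P \in Pc -> exists2 x, x \in X & x \in P) -> #|X| * k < #|Pc| ->
  exists2 x, x \in X & k < #|[set P in Pc | x \in P]|.
Proof.
move=> hitPc ltPc; apply/exists_inP; apply: contraLR ltPc => /exists_inPn lightX.
rewrite -leqNgt; apply: (leq_card_sub_bigcup (F := fun x => [set P in Pc | x \in P])).
  apply/subsetP => P PcP; have [x Xx Px] := hitPc P PcP.
  by apply/bigcupP; exists x; rewrite // inE PcP.
by move=> x /lightX; rewrite -leqNgt.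
Qed.

Lemma exists_subset_card (T : finType) (A : {set T}) n :
  n <= #|A| -> exists2 B : {set T}, B \subset A & #|B| = n.
Proof.
case/card_geqP => s [uniq_s size_s sA]; exists [set x in s].
  by apply/subsetP => x; rewrite inE => /sA.
by rewrite cardsE (card_uniqP uniq_s).
Qed.

Lemma linear_star_flower (T : finType) (Pc : {set {set T}}) x k :
  (forall P Q, P \in Pc -> Q \in Pc -> P != Q -> #|P :&: Q| <= 1) ->
  k < #|[set P in Pc | x \in P]| ->
  exists F : {set {set T}}, [/\ #|F| = k.+1,
    forall P, P \in F -> P \in Pc /\ x \in P &
    forall P Q, P \in F -> Q \in F -> P != Q -> P :&: Q = [set x]].
Proof.
move=> linPc /exists_subset_card [F sF cardF].
have starF P : P \in F -> P \in Pc /\ x \in P.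
  by move/(subsetP sF); rewrite inE => /andP.
exists F; split=> // P Q /starF [PcP Px] /starF [PcQ Qx] neqPQ.
apply/eqP; rewrite eq_sym eqEcard cards1 linPc // andbT.
by rewrite sub1set inE Px Qx.
Qed.

Lemma rho_leq_cover (T : finType) (m : T -> T -> nat) (X : {set T}) v :
  (forall u1 u2, u1 \in nbhd m v -> u2 \in nbhd m v -> u1 != u2 ->
     adj m u1 u2 -> (u1 \in X) || (u2 \in X)) ->
  rho m v <= #|X| * #|nbhd m v|.
Proof.
move=> coverX; apply: (leq_card_sub_bigcup (F := fun x => [set [set x; u] | u in nbhd m v])).
  apply/subsetP => S; rewrite inE => /andP [sSN].
  case/existsP=> u1 /existsP [u2 /and3P [neq12 /eqP defS adj12]].
  have Nu1 : u1 \in nbhd m v by apply: (subsetP sSN); rewrite defS !inE eqxx.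
  have Nu2 : u2 \in nbhd m v by apply: (subsetP sSN); rewrite defS !inE eqxx orbT.
  case/orP: (coverX _ _ Nu1 Nu2 neq12 adj12) => Xu; apply/bigcupP.
    by exists u1 => //; apply/imsetP; exists u2.
  by exists u2 => //; apply/imsetP; exists u1; rewrite // setUC.
by move=> x _; exact: leq_imset_card.
Qed.

Lemma large_dense_rho_gt (T : finType) (m : T -> T -> nat) k v :
  large_dense m k v -> k * #|nbhd m v| < rho m v.
Proof. by case/andP; nia. Qed.

Section Components.
Variables (T : finType) (m : T -> T -> nat).
Hypothesis m_sym : forall u v, m u v = m v u.

Lemma adj_sym : symmetric (adj m).
Proof. by move=> x y; rewrite /adj m_sym. Qed.

Lemma adj_in_sym (C : {set T}) : symmetric (adj_in m C).
Proof. by move=> x y; rewrite /adj_in adj_sym [(x \in C) && _]andbC. Qed.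

Variable X : {set T}.

Definition component (v : T) : {set T} := [set y | connect (adj_in m (~: X)) v y].

Lemma component_refl v : v \in component v.
Proof. by rewrite inE connect0. Qed.

Lemma component_adj_in v x y :
  x \in component v -> adj_in m (~: X) x y -> y \in component v.
Proof. by rewrite !inE => vx /connect1; apply: connect_trans. Qed.

Lemma component_notin v y : v \notin X -> y \in component v -> y \notin X.
Proof.
have closedX : closed (adj_in m (~: X)) (~: X).
  by move=> x z /and3P [_ Xx Xz]; rewrite Xx Xz.
move=> Xv; rewrite inE => /(closed_connect closedX).
by rewrite !inE Xv => <-.
Qed.

Lemma component_adj v x y : v \notin X ->
  x \in component v -> y \notin X -> adj m x y -> y \in component v.
Proof.
move=> Xv Cx Xy xy; apply: (component_adj_in Cx).
by rewrite /adj_in xy !inE Xy (component_notin Xv Cx).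
Qed.

Lemma component_connect v x y : x \in component v ->
  connect (adj_in m (~: X)) x y -> connect (adj_in m (component v)) x y.
Proof.
move=> + /connectP [p + ->]; elim: p x => [|z p IH] x Cx /=; first by rewrite connect0.
case/andP=> xz pz; have Cz := component_adj_in Cx xz.
apply: connect_trans _ (IH z Cz pz); apply: connect1.
by case/and3P: xz => xz _ _; rewrite /adj_in xz Cx Cz.
Qed.

Lemma component_of_minusP v : v \notin X -> component_of_minus m X (component v).
Proof.
move=> Xv; split.
- by apply/set0Pn; exists v; exact: component_refl.
- by rewrite disjoint_subset; apply/subsetP => y /(component_notin Xv); rewrite inE.
- move=> x y Cx Cy; apply: (component_connect Cx).
  move: Cx Cy; rewrite !inE => vx vy; apply: connect_trans _ vy.
  by rewrite (sym_connect_sym (adj_in_sym _)).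
- by move=> x y Cx Xy; exact: component_adj.
Qed.

Hypothesis m_loopless : forall v, m v v = 0.

Lemma adj_irr v : ~~ adj m v v.
Proof. by rewrite /adj m_loopless. Qed.

(* An edge [u1 u2] inside [N(v)] avoiding [X] closes the triangle [v u1 u2]. *)
Lemma acyclic_component_nbhd_cover v : v \notin X ->
  acyclic_in m (component v) -> forall u1 u2,
  u1 \in nbhd m v -> u2 \in nbhd m v -> u1 != u2 -> adj m u1 u2 ->
  (u1 \in X) || (u2 \in X).
Proof.
move=> Xv [_ no_cycle] u1 u2 Nu1 Nu2 neq12 adj12; apply/negPn/negP.
rewrite negb_or => /andP [Xu1 Xu2]; apply: no_cycle; exists [:: v; u1; u2].
move: Nu1 Nu2; rewrite !inE => Nu1 Nu2.
have neqv u : adj m v u -> v != u by apply: contraTneq => <-; exact: adj_irr.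
have Cu1 := component_adj Xv (component_refl v) Xu1 Nu1.
have Cu2 := component_adj Xv (component_refl v) Xu2 Nu2.
split=> //.
- by rewrite /= !inE negb_or neq12 (neqv _ Nu1) (neqv _ Nu2).
- move=> y; rewrite !in_cons in_nil orbF.
  by case/or3P=> /eqP ->; rewrite ?Cu1 ?Cu2 ?component_refl.
- by rewrite /= Nu1 adj12 adj_sym Nu2.
Qed.

Lemma large_dense_component_not_tree k v :
  v \notin X -> #|X| <= k -> v \in V_ld m k -> ~ induces_tree m (component v).
Proof.
move=> Xv leXk; rewrite inE => /large_dense_rho_gt ltrho [_ acyc].
have := rho_leq_cover (acyclic_component_nbhd_cover Xv acyc).
by rewrite leqNgt (leq_ltn_trans (leq_mul leXk (leqnn _)) ltrho).
Qed.

Lemma P3_meets_solution k (P : {set T}) : feasible m k X ->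
  P \subset V_ld m k -> induces_P3 m P -> exists2 x, x \in X & x \in P.
Proof.
move=> [leXk compX] sPV [v1 [v2 [v3 [_ _ neq13 defP [a12 a23 na13]]]]].
have P1 : v1 \in P by rewrite defP !inE eqxx.
have P2 : v2 \in P by rewrite defP !inE eqxx orbT.
have P3 : v3 \in P by rewrite defP !inE eqxx !orbT.
have [X1|X1] := boolP (v1 \in X); first by exists v1.
have [X2|X2] := boolP (v2 \in X); first by exists v2.
have [X3|X3] := boolP (v3 \in X); first by exists v3.
case: (compX _ (component_of_minusP X1)) => [clique|tree]; last first.
  by case: (large_dense_component_not_tree X1 leXk (subsetP sPV _ P1) tree).
have C1 := component_refl v1.
have C3 := component_adj X1 (component_adj X1 C1 X2 a12) X3 a23.
by move: na13; rewrite /adj (clique _ _ C1 C3 neq13).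
Qed.

End Components.

Theorem mainTheorem12 (T : finType) (m : T -> T -> nat) (k : nat)
  (m_sym : forall u v, m u v = m v u)
  (m_loopless : forall v, m v v = 0)
  (no_flower : ~ exists v, v \in V_ld m k /\
     exists F : {set {set T}},
       [/\ #|F| = k.+1,
           forall P, P \in F -> P \subset V_ld m k /\ induces_P3 m P &
           forall P Q, P \in F -> Q \in F -> P != Q -> P :&: Q = [set v]])
  (Pc : {set {set T}})
  (Pc_big : k ^ 2 < #|Pc|)
  (Pc_P3 : forall P, P \in Pc -> P \subset V_ld m k /\ induces_P3 m P)
  (Pc_sparse : forall P Q, P \in Pc -> Q \in Pc -> P != Q -> #|P :&: Q| <= 1) :
  ~ yes_instance m k.
Proof.
move=> [X solX]; have leXk := solX.1.
have hitPc P : P \in Pc -> exists2 x, x \in X & x \in P.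
  by case/Pc_P3 => sPV; exact: (P3_meets_solution m_sym m_loopless solX sPV).
have [|x _ heavy_x] := hitting_set_pigeonhole (k := k) hitPc.
  by apply: leq_ltn_trans Pc_big; rewrite -mulnn leq_mul2r leXk orbT.
have [F [cardF starF flowerF]] := linear_star_flower Pc_sparse heavy_x.
apply: no_flower; exists x; split; last first.
  by exists F; split=> // P /starF [/Pc_P3].
have [P FP] : exists P, P \in F by apply/set0Pn; rewrite -card_gt0 cardF.
have [/Pc_P3 [sPV _] Px] := starF P FP.
exact: subsetP sPV x Px.
Qed.
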